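(* Fix $J=(J_1,J_2)\in\mathbb{R}^2$ and let $S(J)=\{m\in\{1,2,3,4\}: U_m(J)=\min\{U_1(J),U_2(J),U_3(J),U_4(J)\}\}$ and $\mathcal{C}_{S(J)}=\bigcup_{m\in S(J)}\mathcal{C}_m$. Suppose that for every unit ball $b$, every configuration $\sigma_b$ on $b$ belonging to $\mathcal{C}_{S(J)}$, and every unit ball $b'$ neighbouring $b$, there exists exactly one configuration $\sigma'_{b'}$ on $b'$ belonging to $\mathcal{C}_{S(J)}$ that is compatible with $\sigma_b$. Then the relative Hamiltonian $H$ satisfies the Peierls condition.
   Context: Let $G_2$ be the free product of three cyclic groups of order two with generators $a_1,a_2,a_3$; its elements are the vertices $V$ of the Cayley tree $\Gamma^2$ of order 2, where $g,h$ are nearest neighbours (an edge $\langle g,h\rangle$) iff $h=ga_i$ for some $i$; every vertex has 3 neighbours. $d$ is the graph distance. Configurations are maps $\sigma:V\to\{-1,1\}$. A configuration is periodic if there is a subgroup $G^*\subset G_2$ of finite index with $\sigma(gh)=\sigma(h)$ for all $g\in G^*$, $h\in G_2$; it has period not exceeding 2 if such a subgroup of index at most 2 exists. A unit ball is $b=\{y: d(x,y)\le1\}$ for some $x\in V$ (its center $x$ and three leaves); $M$ is the set of unit balls, and $\sigma_b$ is the restriction of $\sigma$ to $b$. Two distinct unit balls are neighbours if they have a common edge; configurations $\sigma_b$, $\sigma'_{b'}$ on neighbouring balls are compatible if they coincide on the endpoints of the common edge. Classes: a configuration on a unit ball belongs to $\mathcal{C}_1$, $\mathcal{C}_2$, $\mathcal{C}_4$,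 $\mathcal{C}_3$ according as exactly $3$, $2$, $1$, $0$ of its leaves carry the same value as its center. The energy of a ball is $U(\sigma_b)=\tfrac12J_1\sum_{\langle x,y\rangle:\,x,y\in b}\sigma(x)\sigma(y)+J_2\sum_{\{x,y\}\subset b:\,d(x,y)=2}\sigma(x)\sigma(y)$ (sums over unordered pairs); it equals $U_1=\tfrac32J_1+3J_2$, $U_2=\tfrac12J_1-J_2$, $U_3=-\tfrac32J_1+3J_2$, $U_4=-\tfrac12J_1-J_2$ on $\mathcal{C}_1,\dots,\mathcal{C}_4$ respectively. For $\sigma,\varphi$ differing at finitely many vertices, the relative Hamiltonian is $H(\sigma,\varphi)=J_1\sum_{\langle x,y\rangle}(\sigma(x)\sigma(y)-\varphi(x)\varphi(y))+J_2\sum_{\{x,y\}:\,d(x,y)=2}(\sigma(x)\sigma(y)-\varphi(x)\varphi(y))$ (unordered pairs). A ground state is a periodic configuration $a$ with $U(a_b)=\min\{U_1,U_2,U_3,U_4\}$ for every $b\in M$. For $x\in V$ let $V_2(x)=\{y: d(x,y)\le2\}$. If the set of all ground states is finite, $\{\sigma^1,\dots,\sigma^q\}$, and each has period not exceeding 2, then for a configuration $\sigma$ the ball $V_2(x)$ is improper if $\sigma|_{V_2(x)}\ne\sigma^j|_{V_2(x)}$ for all $j=1,\dots,q$; the boundary $\partial(\sigma)$ is the union of the improper balls of $\sigma$, and $|\partial(\sigma)|$ is the number of unit balls in $\partial(\sigma)$. $H$ satisfies the Peierls condition if the set of ground states is finite, $\{\sigma^1,\dots,\sigma^q\}$, each of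 period not exceeding 2, and there is a constant $\lambda>0$ such that for every $j$ and every configuration $\sigma$ coinciding with $\sigma^j$ at all but finitely many vertices, $H(\sigma,\sigma^j)\ge\lambda|\partial(\sigma)|$. *)

From HB Require Import structures.
From mathcomp Require Import all_boot all_order all_algebra.
From mathcomp Require Import all_classical all_reals.
From Stdlib Require List.
Set Implicit Arguments. Unset Strict Implicit. Unset Printing Implicit Defensive.
Import Order.TTheory GRing.Theory Num.Theory.

(* The group G_2 = Z/2 * Z/2 * Z/2 with generators a_0,a_1,a_2 (indices 'I_3) *)
(* Elements are reduced words (no two equal adjacent letters), stored       *)
(* REVERSED: the word a_{i1} a_{i2} ... a_{ik} is stored as [:: ik; ...; i1]. *)

Definition reduced (w : seq 'I_3) : bool := sorted (fun a b : 'I_3 => a != b) w.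

(* right multiplication of a (reversed) word by the generator a_i *)
Definition push (i : 'I_3) (w : seq 'I_3) : seq 'I_3 :=
  match w with
  | j :: w' => if j == i then w' else i :: w
  | [::] => [:: i]
  end.

Lemma push_reduced i w : reduced w -> reduced (push i w).
Proof.
case: w => [|j w] //= H.
case: eqP => [_|/eqP ne].
  exact: (path_sorted H).
by rewrite /reduced /= eq_sym ne H.
Qed.

Lemma rev_reduced w : reduced w -> reduced (rev w).
Proof.
move=> H; rewrite /reduced.
have H' : sorted (fun y x : 'I_3 => x != y) (rev w) by rewrite rev_sorted.
apply: (sub_sorted _ H') => x y /=; by rewrite eq_sym.
Qed.

(* vertices of the Cayley tree = elements of G_2 *)
Definition V := {w : seq 'I_3 | reduced w}.

Definition eV : V := exist _ [::] isT.
Definition pushV (i : 'I_3) (x : V) : V := exist _ (push i (val x)) (push_reduced i (valP x)).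
Definition mulV (g h : V) : V := foldr pushV g (val h).
Definition invV (g : V) : V := exist _ (rev (val g)) (rev_reduced (valP g)).

(* graph distance in the Cayley tree: d(x,y) = |x^{-1} y| (word length) *)
Definition dist (x y : V) : nat := size (val (mulV (invV x) y)).

Definition nbrs (x : V) : seq V := [seq pushV i x | i <- enum 'I_3].
Definition sphere2 (x : V) : seq V :=
  [seq pushV j (pushV i x) | i <- enum 'I_3, j <- [seq j <- enum 'I_3 | j != i]].

(* a configuration sigma : V -> {-1,1}, encoded by a boolean (true = +1) *)
Definition config := V -> bool.
Definition spin {R : realType} (b : bool) : R := (if b then 1 else -1)%R.

Definition subgroup (P : V -> Prop) : Prop :=
  [/\ P eV, (forall g h, P g -> P h -> P (mulV g h)) & (forall g, P g -> P (invV g))].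

Definition index_le (P : V -> Prop) (k : nat) : Prop :=
  exists reps : seq V, size reps <= k /\
    forall h : V, exists2 r, r \in reps & exists g, P g /\ h = mulV g r.

Definition periodic_with (sigma : config) (P : V -> Prop) : Prop :=
  subgroup P /\ forall g h, P g -> sigma (mulV g h) = sigma h.

Definition periodic (sigma : config) : Prop :=
  exists P, periodic_with sigma P /\ exists k, index_le P k.

Definition period_le2 (sigma : config) : Prop :=
  exists P, periodic_with sigma P /\ index_le P 2.

Section Energy.
Variable R : realType.
Local Open Scope ring_scope.

Definition U_ball (J1 J2 : R) (sigma : config) (x : V) : R :=
  2^-1 * J1 * (\sum_(i < 3) spin (sigma x) * spin (sigma (pushV i x)))
  + J2 * (\sum_(i < 3) \sum_(j < 3 | (i < j)%N)
            spin (sigma (pushV i x)) * spin (sigma (pushV j x))).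

Definition Uval (J1 J2 : R) (m : nat) : R :=
  match m with
  | 1 => 3 / 2 * J1 + 3 * J2
  | 2 => 2^-1 * J1 - J2
  | 3 => - (3 / 2) * J1 + 3 * J2
  | _ => - 2^-1 * J1 - J2
  end.

Definition Umin (J1 J2 : R) : R :=
  Num.min (Num.min (Uval J1 J2 1) (Uval J1 J2 2)) (Num.min (Uval J1 J2 3) (Uval J1 J2 4)).

(* relative Hamiltonian H(sigma, phi), computed with a finite set D of
   vertices outside of which sigma and phi coincide; all pairs with a
   nonzero contribution have an endpoint in D, hence both endpoints in the
   list N below. Ordered pairs are summed, hence the factor 1/2. *)
Definition relevant (D : seq V) : seq V :=
  undup (D ++ flatten [seq nbrs x | x <- D] ++ flatten [seq sphere2 x | x <- D]).

Definition Hrel (J1 J2 : R) (D : seq V) (sigma phi : config) : R :=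
  2^-1 * J1 * (\sum_(x <- relevant D) \sum_(y <- nbrs x)
       (spin (sigma x) * spin (sigma y) - spin (phi x) * spin (phi y)))
  + 2^-1 * J2 * (\sum_(x <- relevant D) \sum_(y <- sphere2 x)
       (spin (sigma x) * spin (sigma y) - spin (phi x) * spin (phi y))).

Definition ground_state (J1 J2 : R) (a : config) : Prop :=
  periodic a /\ forall x : V, U_ball J1 J2 a x = Umin J1 J2.

End Energy.

Definition class_of (sigma : config) (x : V) : nat :=
  match count (fun y => sigma y == sigma x) (nbrs x) with
  | 3 => 1 | 2 => 2 | 1 => 4 | _ => 3
  end.

Definition in_CS {R : realType} (J1 J2 : R) (sigma : config) (x : V) : bool :=
  has (fun m => (Uval J1 J2 m == Umin J1 J2) && (class_of sigma x == m)) [:: 1; 2; 3; 4]%N.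

Definition in_ball (x y : V) : bool := (dist x y <= 1)%N.
Definition agree_on_ball (x : V) (s t : config) : Prop :=
  forall y, in_ball x y -> s y = t y.

Definition ball_edges (x : V) : seq (V * V) := [seq (x, pushV i x) | i <- enum 'I_3].
Definition same_edge (e f : V * V) : bool :=
  ((e.1 == f.1) && (e.2 == f.2)) || ((e.1 == f.2) && (e.2 == f.1)).
Definition balls_nbr (x x' : V) : bool :=
  (x != x') && has (fun e => has (same_edge e) (ball_edges x')) (ball_edges x).
Definition compatible (sigma : config) (x : V) (tau : config) (x' : V) : Prop :=
  forall e f, e \in ball_edges x -> f \in ball_edges x' -> same_edge e f ->
    sigma e.1 = tau e.1 /\ sigma e.2 = tau e.2.

Definition improper (gs : seq config) (sigma : config) (x : V) : Prop :=
  forall a, List.In a gs -> exists y, (dist x y <= 2)%N /\ sigma y <> a y.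
Definition in_boundary (gs : seq config) (sigma : config) (y : V) : Prop :=
  exists x, improper gs sigma x /\ (dist x y <= 2)%N.
Definition ball_in_boundary (gs : seq config) (sigma : config) (z : V) : Prop :=
  forall y, in_ball z y -> in_boundary gs sigma y.

Definition Peierls {R : realType} (J1 J2 : R) : Prop :=
  exists gs : seq config,
    (forall a, ground_state J1 J2 a <-> exists2 a', List.In a' gs & a =1 a') /\
    (forall a, List.In a gs -> period_le2 a) /\
    exists lambda : R, (0 < lambda)%R /\
      forall a, List.In a gs ->
      forall (sigma : config) (D : seq V), (forall x, x \notin D -> sigma x = a x) ->
        exists s : seq V,
          [/\ uniq s, (forall z, z \in s <-> ball_in_boundary gs sigma z)
            & (lambda * (size s)%:R <= Hrel J1 J2 D sigma a)%R].

(* Uniqueness of compatible continuations excludes C_2 and C_4 from the minimal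
   classes: a ball of either class admits two continuations of its own class on a
   neighbouring ball.  So C_S lies in C_1 u C_3, neighbouring balls in C_S share
   their class, and the ground states are the constant and the alternating
   configurations, both of period at most 2.  The relative Hamiltonian equals the
   total excess energy sum_b (U(sigma_b) - U_min), in which every ball outside C_S
   contributes at least the smallest positive gap delta.  A configuration lying in
   C_S on a unit ball and its three neighbours agrees with a ground state on the
   radius-2 ball around it, so every boundary ball lies within distance 3 of a ball
   outside C_S; a radius-3 ball has at most 4^3 = 64 vertices, whence the Peierls
   condition with lambda = delta / 64. *)

From Pilot Require Import Defs.
From mathcomp Require Import all_boot all_order all_algebra.
From mathcomp Require Import all_classical all_reals.
From mathcomp Require Import ring lra.
Set Implicit Arguments. Unset Strict Implicit. Unset Printing Implicit Defensive.
Import Order.TTheory GRing.Theory Num.Theory.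

Lemma push_cons i w : reduced (i :: w) -> push i w = i :: w.
Proof.
by case: w => [|j w] //; rewrite /reduced /= => /andP[ji _]; rewrite eq_sym (negbTE ji).
Qed.

Lemma pushK i w : reduced w -> push i (push i w) = w.
Proof.
case: w => [|j w] /=; first by rewrite eqxx.
by case: eqP => [-> /push_cons|_ _] //=; rewrite eqxx.
Qed.

Lemma reduced_foldr_push g l : reduced g -> reduced (foldr push g l).
Proof. by move=> Hg; elim: l => [|i l IH] //=; apply: push_reduced. Qed.

Lemma foldr_push_nil w : reduced w -> foldr push [::] w = w.
Proof.
elim: w => [|i w IH] //= Hw.
by rewrite IH ?push_cons //; apply: path_sorted Hw.
Qed.

Lemma foldr_push_push g i w :
  reduced g -> foldr push g (push i w) = push i (foldr push g w).
Proof.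
move=> Hg; case: w => [|j w] //=.
by case: eqP => [->|_] //=; rewrite pushK // reduced_foldr_push.
Qed.

Lemma foldr_push_foldr g h l : reduced g ->
  foldr push g (foldr push h l) = foldr push (foldr push g h) l.
Proof. by move=> Hg; elim: l => [|i l IH] //=; rewrite foldr_push_push // IH. Qed.

Lemma foldr_push_rev w : reduced w -> foldr push w (rev w) = [::].
Proof.
elim: w => [|i w IH] //= Hw.
by rewrite rev_cons foldr_rcons /= eqxx IH //; apply: path_sorted Hw.
Qed.

Lemma mulV_val (g h : V) : val (mulV g h) = foldr push (val g) (val h).
Proof. by rewrite /mulV; elim: (val h) => [|i l IH] //=; rewrite IH. Qed.

Lemma mulV_invVK (x y : V) : mulV x (mulV (Defs.invV x) y) = y.
Proof.
apply: val_inj; rewrite !mulV_val foldr_push_foldr ?(valP x) //.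
by rewrite foldr_push_rev ?(valP x) // foldr_push_nil // (valP y).
Qed.

Lemma dist_refl x : dist x x = 0%N.
Proof.
rewrite /dist mulV_val /= -{2}(revK (val x)).
by rewrite foldr_push_rev // rev_reduced // (valP x).
Qed.

Lemma pushVK i : involutive (pushV i).
Proof. by move=> x; apply: val_inj; rewrite /= pushK // (valP x). Qed.

Lemma pushV_inj i : injective (pushV i).
Proof. exact: can_inj (pushVK i). Qed.

Lemma pushV_ind (P : V -> Prop) :
  P eV -> (forall i x, P x -> P (pushV i x)) -> forall x, P x.
Proof.
move=> P0 PS [w Hw]; elim: w Hw => [|i w IH] Hw; first by rewrite (bool_irrelevance Hw isT).
have Hw' : reduced w := path_sorted Hw.
have -> : exist reduced (i :: w) Hw = pushV i (exist reduced w Hw').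
  by apply: val_inj; rewrite /= push_cons.
exact/PS/IH.
Qed.

Lemma mem_nbrs i x : pushV i x \in nbrs x.
Proof. by apply: map_f; rewrite mem_enum. Qed.

Lemma nbrsP x y : reflect (exists i, y = pushV i x) (y \in nbrs x).
Proof. by apply: (iffP mapP) => [[i _ ->]|[i ->]]; exists i; rewrite ?mem_enum. Qed.

Lemma nbrs_sym x y : y \in nbrs x -> x \in nbrs y.
Proof. by case/nbrsP=> i ->; apply/nbrsP; exists i; rewrite pushVK. Qed.

Lemma size_nbrs x : size (nbrs x) = 3%N.
Proof. by rewrite size_map size_enum_ord. Qed.

Lemma size_flatten_map_const (T U : Type) (f : T -> seq U) c s :
  (forall y, size (f y) = c) -> size (flatten (map f s)) = (c * size s)%N.
Proof. by move=> Hf; elim: s => [|y s IH] /=; rewrite ?muln0 // size_cat IH Hf mulnS. Qed.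

Fixpoint walk_ball (k : nat) (x : V) : seq V :=
  if k is k'.+1 then walk_ball k' x ++ flatten [seq nbrs y | y <- walk_ball k' x]
  else [:: x].

Lemma walk_ball1 x : walk_ball 1 x = x :: nbrs x.
Proof. by rewrite /= cats0. Qed.

Lemma walk_ball1_sym x y : y \in walk_ball 1 x -> x \in walk_ball 1 y.
Proof.
rewrite !walk_ball1 !inE => /predU1P[->|/nbrs_sym ->]; first by rewrite eqxx.
by rewrite orbT.
Qed.

Lemma walk_ball_nbrs k x y z :
  y \in walk_ball k x -> z \in nbrs y -> z \in walk_ball k.+1 x.
Proof. by move=> Hy Hz; rewrite mem_cat; apply/orP; right; apply/flatten_mapP; exists y. Qed.

Lemma walk_ball_mono k k' x y :
  (k <= k')%N -> y \in walk_ball k x -> y \in walk_ball k' x.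
Proof. by move/subnK <-; elim: (k' - k)%N => [|d IH] //= Hy; rewrite mem_cat IH. Qed.

Lemma walk_ball_trans m n x y z :
  y \in walk_ball m x -> z \in walk_ball n y -> z \in walk_ball (m + n) x.
Proof.
move=> Hy; elim: n z => [|n IH] z /=; first by rewrite addn0 inE => /eqP ->.
rewrite addnS mem_cat => /orP[/IH Hz|/flatten_mapP[t /IH Ht Hz]].
  by rewrite mem_cat Hz.
exact: walk_ball_nbrs Ht Hz.
Qed.

Lemma mem_walk_ball_foldr x l : foldr pushV x l \in walk_ball (size l) x.
Proof.
elim: l => [|i l IH] /=; first by rewrite inE.
exact: walk_ball_nbrs IH (mem_nbrs _ _).
Qed.

Lemma dist_walk_ball k x y : (dist x y <= k)%N -> y \in walk_ball k x.
Proof.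
move=> Hk; rewrite -(mulV_invVK x y).
exact: walk_ball_mono Hk (mem_walk_ball_foldr _ _).
Qed.

Lemma size_walk_ball k x : size (walk_ball k x) = (4 ^ k)%N.
Proof.
elim: k => [|k IH] //=.
by rewrite size_cat (size_flatten_map_const _ size_nbrs) IH -mulSn expnS.
Qed.

Lemma walk_ball2P x y : y \in walk_ball 2 x ->
  [\/ y = x, exists i, y = pushV i x | exists i j, y = pushV j (pushV i x)].
Proof.
rewrite -[walk_ball 2 x]/(walk_ball 1 x ++ flatten [seq nbrs t | t <- walk_ball 1 x]).
rewrite walk_ball1 mem_cat.
case/orP=> [|/flatten_mapP[t Ht /nbrsP[j ->]]].
  by rewrite inE => /predU1P[->|/nbrsP[i ->]]; [constructor 1|constructor 2; exists i].
move: Ht; rewrite inE => /predU1P[->|/nbrsP[i ->]]; first by constructor 2; exists j.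
by constructor 3; exists i, j.
Qed.

Definition i0 : 'I_3 := @Ordinal 3 0 isT.
Definition i1 : 'I_3 := @Ordinal 3 1 isT.
Definition i2 : 'I_3 := @Ordinal 3 2 isT.

Lemma enum_ord3 : enum 'I_3 = [:: i0; i1; i2].
Proof. by apply: (inj_map val_inj); rewrite val_enum_ord. Qed.

Lemma ord3_ind (P : 'I_3 -> Prop) : P i0 -> P i1 -> P i2 -> forall i, P i.
Proof.
move=> P0 P1 P2 i; have := mem_enum 'I_3 i.
by rewrite enum_ord3 !inE => /or3P[]/eqP->.
Qed.

Lemma sum_ord3 (M : nmodType) (F : 'I_3 -> M) : (\sum_(i < 3) F i = F i0 + F i1 + F i2)%R.
Proof.
rewrite !big_ord_recl big_ord0 addr0 addrA.
by congr (F _ + F _ + F _)%R; apply: val_inj.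
Qed.

Lemma nbrs3 x : nbrs x = [:: pushV i0 x; pushV i1 x; pushV i2 x].
Proof. by rewrite /nbrs enum_ord3. Qed.

Lemma class1P (s : config) x : class_of s x = 1%N <-> forall i, s (pushV i x) = s x.
Proof.
rewrite /class_of nbrs3 /=; split => [Hc|H]; last by rewrite !H eqxx.
by apply: ord3_ind; move: Hc; case: (s x); case: (s (pushV i0 x));
  case: (s (pushV i1 x)); case: (s (pushV i2 x)).
Qed.

Lemma class3P (s : config) x : class_of s x = 3%N <-> forall i, s (pushV i x) = ~~ s x.
Proof.
rewrite /class_of nbrs3 /=; split => [Hc|H]; last by rewrite !H; case: (s x).
by apply: ord3_ind; move: Hc; case: (s x); case: (s (pushV i0 x));
  case: (s (pushV i1 x)); case: (s (pushV i2 x)).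
Qed.

Lemma class_ofP (s : config) x :
  [\/ class_of s x = 1%N, class_of s x = 2%N, class_of s x = 3%N | class_of s x = 4%N].
Proof. by rewrite /class_of; case: count => [|[|[|[|n]]]]; constructor. Qed.

Section Energy.
Variables (R : realType) (J1 J2 : R).
Local Open Scope ring_scope.

Lemma U_ball_class (s : config) x : U_ball J1 J2 s x = Uval J1 J2 (class_of s x).
Proof.
rewrite /U_ball /class_of nbrs3 !sum_ord3; do 3! rewrite big_mkcond sum_ord3 /=.
by case: (s x); case: (s (pushV i0 x)); case: (s (pushV i1 x));
  case: (s (pushV i2 x)); rewrite /spin /Uval /=; lra.
Qed.

Lemma Umin_le m : Umin J1 J2 <= Uval J1 J2 m.
Proof. by rewrite /Umin; case: m => [|[|[|[|m]]]]; rewrite !ge_min lexx ?orbT. Qed.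

Lemma in_CS_class (s : config) x :
  in_CS J1 J2 s x = (Uval J1 J2 (class_of s x) == Umin J1 J2).
Proof. by rewrite /in_CS; case: (class_ofP s x) => ->; rewrite /= ?andbT ?andbF ?orbF. Qed.

Lemma in_CS_U_ball (s : config) x : in_CS J1 J2 s x = (U_ball J1 J2 s x == Umin J1 J2).
Proof. by rewrite in_CS_class U_ball_class. Qed.

Lemma eq_in_CS (s t : config) x : s x = t x ->
  (forall i, s (pushV i x) = t (pushV i x)) -> in_CS J1 J2 s x = in_CS J1 J2 t x.
Proof. by move=> Hx H; rewrite /in_CS /class_of nbrs3 /= Hx !H. Qed.

End Energy.

Definition unique_compatible_extension (R : realType) (J1 J2 : R) : Prop :=
  forall (x x' : V) (sigma : config),
    in_CS J1 J2 sigma x -> balls_nbr x x' ->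
    exists tau : config,
      [/\ in_CS J1 J2 tau x', compatible sigma x tau x' &
          forall tau' : config, in_CS J1 J2 tau' x' -> compatible sigma x tau' x' ->
            agree_on_ball x' tau' tau].

Lemma compatible_centers (s t : config) x x' :
  x != x' -> s x = t x -> s x' = t x' -> compatible s x t x'.
Proof.
move=> xx' Hx Hx' _ _ /mapP[i _ ->] /mapP[j _ ->].
by rewrite /same_edge /= => /orP[/andP[/eqP E _]|/andP[_ /eqP ->]]; rewrite ?E ?eqxx in xx'.
Qed.

Definition e0 : V := pushV i0 eV.

Section Uniqueness.
Variables (R : realType) (J1 J2 : R).
Hypothesis uniq_ext : unique_compatible_extension J1 J2.

Lemma compatible_extensions_agree (s t1 t2 : config) x x' :
  in_CS J1 J2 s x -> balls_nbr x x' ->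
  in_CS J1 J2 t1 x' -> compatible s x t1 x' ->
  in_CS J1 J2 t2 x' -> compatible s x t2 x' -> agree_on_ball x' t1 t2.
Proof.
move=> Hs Hxx' Ht1 K1 Ht2 K2 y Hy.
have [tau [_ _ U]] := uniq_ext Hs Hxx'.
by rewrite (U t1) ?(U t2).
Qed.

(* The ball at [e0 = a_0] meets the ball at [eV] only in the edge [eV, a_0], so
   its leaves [a_0 a_1] and [a_0 a_2] are free.  For suitable C_2 and C_4 balls at
   [eV], exactly one of them must agree with [a_0], which can be done in two ways. *)
Lemma Uval_not_min_of_branching m (s t1 t2 : config) :
  class_of s eV = m -> class_of t1 e0 = m -> class_of t2 e0 = m ->
  [/\ s eV = t1 eV, s eV = t2 eV, s e0 = t1 e0 & s e0 = t2 e0] ->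
  t1 (pushV i1 e0) != t2 (pushV i1 e0) -> Uval J1 J2 m != Umin J1 J2.
Proof.
move=> Cs C1 C2 [E1 E2 E1' E2'] /eqP t12; apply/negP => min_m.
have inCS t y : class_of t y = m -> in_CS J1 J2 t y by rewrite in_CS_class => ->.
have nbr : balls_nbr eV e0 by rewrite /balls_nbr /ball_edges enum_ord3; vm_compute.
have K1 : compatible s eV t1 e0 by apply: compatible_centers.
have K2 : compatible s eV t2 e0 by apply: compatible_centers.
apply: t12; apply: (compatible_extensions_agree (inCS _ _ Cs) nbr
  (inCS _ _ C1) K1 (inCS _ _ C2) K2).
by vm_compute.
Qed.

Lemma Uval2_not_min : Uval J1 J2 2 != Umin J1 J2.
Proof.
apply: (@Uval_not_min_of_branching 2 (fun v => val v != [:: i2])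
  (fun v => val v != [:: i1; i0]) (fun v => val v != [:: i2; i0]));
  by rewrite /class_of ?nbrs3; vm_compute.
Qed.

Lemma Uval4_not_min : Uval J1 J2 4 != Umin J1 J2.
Proof.
apply: (@Uval_not_min_of_branching 4 (fun v => (val v == [::]) || (val v == [:: i1]))
  (fun v => (val v == [::]) || (val v == [:: i1; i0]))
  (fun v => (val v == [::]) || (val v == [:: i2; i0])));
  by rewrite /class_of ?nbrs3; vm_compute.
Qed.

End Uniqueness.

Definition const_config (b : bool) : config := fun _ => b.
Definition alt_config (b : bool) : config := fun v => b (+) odd (size (val v)).

Lemma odd_size_push i w : odd (size (push i w)) = ~~ odd (size w).
Proof. by case: w => [|j w] //=; case: eqP => //= _; rewrite negbK. Qed.

Lemma alt_config_push b i x : alt_config b (pushV i x) = ~~ alt_config b x.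
Proof. by rewrite /alt_config /= odd_size_push addbN. Qed.

Lemma odd_size_mulV (g h : V) :
  odd (size (val (mulV g h))) = odd (size (val g)) (+) odd (size (val h)).
Proof.
rewrite mulV_val; elim: (val h) => [|i l IH] /=; first by rewrite addbF.
by rewrite odd_size_push IH addbN.
Qed.

Lemma period_le2_const b : period_le2 (const_config b).
Proof.
exists (fun=> True); split; first by split => //; split.
by exists [:: eV]; split => // h; exists eV; rewrite ?inE //; exists h.
Qed.

(* The period subgroup is that of the even words, with coset representatives
   [eV] and [a_0]. *)
Lemma period_le2_alt b : period_le2 (alt_config b).
Proof.
pose even (g : V) := ~~ odd (size (val g)).
exists even; split.
  split; first split.
  - by [].
  - by move=> g h; rewrite /even odd_size_mulV => /negbTE-> /negbTE->.
  - by move=> g; rewrite /even /= size_rev.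
  by move=> g h; rewrite /even /alt_config odd_size_mulV => /negbTE->.
exists [:: eV; pushV i0 eV]; split => // h.
case Eh: (odd (size (val h))).
  exists (pushV i0 eV); first by rewrite !inE eqxx orbT.
  by exists (pushV i0 h); rewrite /even /= odd_size_push Eh /mulV /= pushVK.
by exists eV; rewrite ?inE //; exists h; rewrite /even Eh.
Qed.

Lemma class1_const (s : config) : (forall x, class_of s x = 1%N) -> s =1 const_config (s eV).
Proof.
by move=> C; apply: pushV_ind => // i x Ex; rewrite ((class1P _ _).1 (C x)).
Qed.

Lemma class3_alt (s : config) : (forall x, class_of s x = 3%N) -> s =1 alt_config (s eV).
Proof.
move=> C; apply: pushV_ind => [|i x Ex]; first by rewrite /alt_config addbF.
by rewrite ((class3P _ _).1 (C x)) alt_config_push Ex.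
Qed.

Section GroundStates.
Variables (R : realType) (J1 J2 : R).
Hypotheses (not_min2 : Uval J1 J2 2 != Umin J1 J2) (not_min4 : Uval J1 J2 4 != Umin J1 J2).
Local Open Scope ring_scope.

Let min1 := Uval J1 J2 1 == Umin J1 J2.
Let min3 := Uval J1 J2 3 == Umin J1 J2.

Lemma in_CS_class13 (s : config) x : in_CS J1 J2 s x ->
  min1 && (class_of s x == 1%N) || min3 && (class_of s x == 3%N).
Proof.
rewrite in_CS_class /min1 /min3.
case: (class_ofP s x) => ->; rewrite ?(negbTE not_min2) ?(negbTE not_min4) // => ->.
  by [].
by rewrite orbT.
Qed.

Definition ground_states : seq config :=
  (if min1 then [:: const_config true; const_config false] else [::]) ++
  (if min3 then [:: alt_config true; alt_config false] else [::]).

Lemma ground_states_const b : min1 -> List.In (const_config b) ground_states.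
Proof. by move=> m1; apply: List.in_or_app; left; rewrite m1; case: b; [left|right; left]. Qed.

Lemma ground_states_alt b : min3 -> List.In (alt_config b) ground_states.
Proof. by move=> m3; apply: List.in_or_app; right; rewrite m3; case: b; [left|right; left]. Qed.

Lemma ground_statesP a : List.In a ground_states ->
  (min1 /\ exists b, a = const_config b) \/ (min3 /\ exists b, a = alt_config b).
Proof.
move=> Ha; case: (List.in_app_or _ _ _ Ha); [case m1: min1|case m3: min3] => //= -[<-|[<-|[]]];
  by [left; split => //; eexists|right; split => //; eexists].
Qed.

Lemma ground_states_period_le2 a : List.In a ground_states -> period_le2 a.
Proof.
by case/ground_statesP => -[_ [b ->]]; [apply: period_le2_const|apply: period_le2_alt].
Qed.

Lemma ground_states_in_CS a : List.In a ground_states -> forall x, in_CS J1 J2 a x.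
Proof.
case/ground_statesP => -[m [b ->]] x; rewrite in_CS_class.
  by rewrite (_ : class_of _ _ = 1%N) //; apply/class1P.
rewrite (_ : class_of _ _ = 3%N) //; apply/class3P => i; exact: alt_config_push.
Qed.

Lemma ground_states_ground_state a : List.In a ground_states -> ground_state J1 J2 a.
Proof.
move=> Ha; split; last by move=> x; apply/eqP; rewrite -in_CS_U_ball ground_states_in_CS.
by have [P [HP HI]] := ground_states_period_le2 Ha; exists P; split => //; exists 2%N.
Qed.

Lemma in_CS_nbr_class (s : config) x i : in_CS J1 J2 s x -> in_CS J1 J2 s (pushV i x) ->
  class_of s (pushV i x) = class_of s x.
Proof.
move=> /in_CS_class13/orP[]/andP[_ /eqP Cx] /in_CS_class13/orP[]/andP[_ /eqP Cy];
  rewrite Cx Cy //.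
- have := (class3P _ _).1 Cy i; rewrite pushVK ((class1P _ _).1 Cx i).
  by case: (s x).
- have := (class1P _ _).1 Cy i; rewrite pushVK ((class3P _ _).1 Cx i).
  by case: (s x).
Qed.

Lemma ground_state_ground_states a :
  ground_state J1 J2 a -> exists2 a', List.In a' ground_states & a =1 a'.
Proof.
case=> _ Ua; have inCS x : in_CS J1 J2 a x by rewrite in_CS_U_ball Ua.
have C x : class_of a x = class_of a eV.
  by elim/pushV_ind: x => // i x <-; apply: in_CS_nbr_class.
case/orP: (in_CS_class13 (inCS eV)) => /andP[m /eqP C0].
  by exists (const_config (a eV)); [apply: ground_states_const|apply: class1_const => x; rewrite C].
by exists (alt_config (a eV)); [apply: ground_states_alt|apply: class3_alt => x; rewrite C].
Qed.

Lemma ground_state_iff a :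
  ground_state J1 J2 a <-> exists2 a', List.In a' ground_states & a =1 a'.
Proof.
split; first exact: ground_state_ground_states.
by case=> a' Ha' /funext ->; apply: ground_states_ground_state.
Qed.

Lemma in_CS_walk_ball2 (s : config) x : in_CS J1 J2 s x ->
  (forall i, in_CS J1 J2 s (pushV i x)) ->
  exists2 a, List.In a ground_states & forall y, y \in walk_ball 2 x -> s y = a y.
Proof.
move=> Hx Hn; have C i : class_of s (pushV i x) = class_of s x by apply: in_CS_nbr_class.
case/orP: (in_CS_class13 Hx) => /andP[m /eqP Cx].
  exists (const_config (s x)); first exact: ground_states_const.
  have E i y : class_of s y = 1%N -> s (pushV i y) = s y by move/class1P.
  by move=> y /walk_ball2P[->|[i ->]|[i [j ->]]]; rewrite /const_config ?E ?C.
exists (alt_config (s x (+) odd (size (val x)))); first exact: ground_states_alt.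
have E i y : class_of s y = 3%N -> s (pushV i y) = ~~ s y by move/class3P.
have Ax : alt_config (s x (+) odd (size (val x))) x = s x by rewrite /alt_config -addbA addbb addbF.
by move=> y /walk_ball2P[->|[i ->]|[i [j ->]]]; rewrite ?alt_config_push Ax ?E ?C.
Qed.

End GroundStates.

Lemma eq_big_uniq_support (T : eqType) (M : nmodType) (r1 r2 : seq T) (F : T -> M) :
  uniq r1 -> uniq r2 -> (forall y, F y != 0%R -> (y \in r1) && (y \in r2)) ->
  (\sum_(y <- r1) F y = \sum_(y <- r2) F y)%R.
Proof.
move=> U1 U2 HF; have nz y : ~~ (F y != 0%R) -> F y = 0%R by move/negPn/eqP.
rewrite -[LHS](big_rmcond _ _ nz) -[RHS](big_rmcond _ _ nz) -(big_filter r1) -(big_filter r2).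
apply/perm_big/uniq_perm; rewrite ?filter_uniq // => y; rewrite !mem_filter.
by case: (boolP (F y != 0%R)) => // /HF /andP[-> ->].
Qed.

Lemma sum_neq_pairs (M : nmodType) n (h : 'I_n -> 'I_n -> M) : (forall i j, h i j = h j i) ->
  (\sum_(i < n) \sum_(j < n | j != i) h i j = (\sum_(i < n) \sum_(j < n | (i < j)%N) h i j) *+ 2)%R.
Proof.
move=> hC; rewrite mulr2n [X in (_ = _ + X)%R](exchange_big_dep xpredT) //= -big_split.
apply: eq_bigr => i _; rewrite (bigID (fun j : 'I_n => (i < j)%N)) /=; congr (_ + _)%R.
  by apply: eq_bigl => j; rewrite -(inj_eq val_inj) neq_ltn; case: ltngtP.
apply: eq_big => [j|j _]; last exact: hC.
by rewrite -(inj_eq val_inj) neq_ltn; case: ltngtP.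
Qed.

Lemma mem_relevant D x : x \in D -> x \in relevant D.
Proof. by move=> Hx; rewrite mem_undup mem_cat Hx. Qed.

Lemma mem_relevant_nbrs D x y : x \in D -> y \in nbrs x -> y \in relevant D.
Proof.
move=> Hx Hy; rewrite mem_undup !mem_cat (_ : y \in flatten _) ?orbT //.
by apply/flatten_mapP; exists x.
Qed.

Lemma mem_relevant_sphere2 D x y : x \in D -> y \in sphere2 x -> y \in relevant D.
Proof.
move=> Hx Hy; rewrite mem_undup !mem_cat (_ : y \in flatten [seq sphere2 x | x <- D]) ?orbT //.
by apply/flatten_mapP; exists x.
Qed.

Lemma mem_sphere2 i j x : i != j -> pushV j (pushV i x) \in sphere2 x.
Proof.
move=> ij; apply/flatten_mapP; exists i; first by rewrite mem_enum.
by apply: (map_f (fun j => pushV j (pushV i x))); rewrite mem_filter mem_enum eq_sym ij.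
Qed.

Lemma big_nbrs (M : nmodType) x (F : V -> M) :
  (\sum_(y <- nbrs x) F y = \sum_i F (pushV i x))%R.
Proof. by rewrite big_map big_enum. Qed.

Lemma big_sphere2 (M : nmodType) x (F : V -> M) :
  (\sum_(y <- sphere2 x) F y = \sum_i \sum_(j | j != i) F (pushV j (pushV i x)))%R.
Proof.
by rewrite big_allpairs_dep big_enum; apply: eq_bigr => i _; rewrite big_filter big_enum_cond.
Qed.

Section Hamiltonian.
Variables (R : realType) (J1 J2 : R) (s a : config) (D : seq V).
Hypothesis eq_off_D : forall x, x \notin D -> s x = a x.
Local Open Scope ring_scope.

Definition pair_diff u v : R := spin (s u) * spin (s v) - spin (a u) * spin (a v).

Lemma pair_diffC u v : pair_diff u v = pair_diff v u.
Proof. by rewrite /pair_diff mulrC [spin (a u) * _]mulrC. Qed.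

Lemma pair_diff_support u v : pair_diff u v != 0 -> (u \in D) || (v \in D).
Proof. by apply: contraR; rewrite negb_or => /andP[Hu Hv]; rewrite /pair_diff !eq_off_D ?subrr. Qed.

(* Re-indexes the distance-2 pair [x, x a_i a_j] by its midpoint [x a_i]; both
   sums contain every nonzero term. *)
Lemma sum_relevant_midpoint i j : i != j ->
  \sum_(x <- relevant D) pair_diff x (pushV j (pushV i x)) =
  \sum_(x <- relevant D) pair_diff (pushV i x) (pushV j x).
Proof.
move=> ij; have -> : \sum_(x <- relevant D) pair_diff (pushV i x) (pushV j x) =
    \sum_(y <- map (pushV i) (relevant D)) pair_diff y (pushV j (pushV i y)).
  by rewrite big_map; apply: eq_bigr => x _; rewrite pushVK.
apply: eq_big_uniq_support; rewrite ?map_inj_uniq ?undup_uniq //; first exact: pushV_inj.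
move=> y /pair_diff_support/orP[Hy|Hw].
  rewrite mem_relevant //=; apply/mapP; exists (pushV i y); rewrite ?pushVK //.
  exact: mem_relevant_nbrs Hy (mem_nbrs _ _).
set w := pushV j (pushV i y) in Hw; have Ew : pushV j w = pushV i y by rewrite pushVK.
apply/andP; split.
  apply: (mem_relevant_sphere2 Hw).
  by rewrite -[y](pushVK i) -Ew mem_sphere2 // eq_sym.
apply/mapP; exists (pushV i y); rewrite ?pushVK //.
by apply: (mem_relevant_nbrs Hw); rewrite -Ew mem_nbrs.
Qed.

Lemma U_ball_diff x : U_ball J1 J2 s x - U_ball J1 J2 a x =
  2^-1 * J1 * \sum_i pair_diff x (pushV i x) +
  J2 * \sum_(i < 3) \sum_(j < 3 | (i < j)%N) pair_diff (pushV i x) (pushV j x).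
Proof.
rewrite /U_ball /pair_diff sumrB.
under [X in _ = _ + J2 * X]eq_bigr do rewrite sumrB.
by rewrite sumrB; ring.
Qed.

(* Each edge lies in the two unit balls centred at its endpoints, and each
   pair at distance 2 in the single ball centred at its midpoint. *)
Lemma Hrel_excess :
  Hrel J1 J2 D s a = \sum_(x <- relevant D) (U_ball J1 J2 s x - U_ball J1 J2 a x).
Proof.
have edges : \sum_(x <- relevant D) \sum_(y <- nbrs x) pair_diff x y =
    \sum_(x <- relevant D) \sum_i pair_diff x (pushV i x).
  by apply: eq_bigr => x _; rewrite big_nbrs.
have pairs : \sum_(x <- relevant D) \sum_(y <- sphere2 x) pair_diff x y =
    (\sum_(x <- relevant D) \sum_(i < 3) \sum_(j < 3 | (i < j)%N)
       pair_diff (pushV i x) (pushV j x)) *+ 2.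
  rewrite -sumrMnl.
  under [RHS]eq_bigr => x _
    do rewrite -(sum_neq_pairs (fun i j => pair_diffC (pushV i x) (pushV j x))).
  under [LHS]eq_bigr => x _ do rewrite big_sphere2.
  rewrite exchange_big [RHS]exchange_big; apply: eq_bigr => i _.
  rewrite exchange_big [RHS]exchange_big; apply: eq_bigr => j ji.
  by rewrite sum_relevant_midpoint // eq_sym.
have -> : Hrel J1 J2 D s a =
    2^-1 * J1 * (\sum_(x <- relevant D) \sum_(y <- nbrs x) pair_diff x y) +
    2^-1 * J2 * (\sum_(x <- relevant D) \sum_(y <- sphere2 x) pair_diff x y) by [].
under [RHS]eq_bigr do rewrite U_ball_diff.
by rewrite edges pairs big_split -!mulr_sumr /= mulr2n; field.
Qed.

End Hamiltonian.

Section Gap.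
Variables (R : realType) (J1 J2 : R).
Local Open Scope ring_scope.

Definition Uval_gap m : R :=
  if Uval J1 J2 m == Umin J1 J2 then 1 else Uval J1 J2 m - Umin J1 J2.

Definition min_gap : R :=
  Num.min (Num.min (Uval_gap 1) (Uval_gap 2)) (Num.min (Uval_gap 3) (Uval_gap 4)).

Lemma Uval_gap_gt0 m : 0 < Uval_gap m.
Proof.
rewrite /Uval_gap; case: eqP => // ne.
by rewrite subr_gt0 lt_def Umin_le andbT; apply/eqP => E; apply: ne.
Qed.

Lemma min_gap_gt0 : 0 < min_gap.
Proof. by rewrite !lt_min !Uval_gap_gt0. Qed.

Lemma U_ball_excess_ge0 (s : config) x : 0 <= U_ball J1 J2 s x - Umin J1 J2.
Proof. by rewrite subr_ge0 U_ball_class Umin_le. Qed.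

Lemma min_gap_le_excess (s : config) x :
  ~~ in_CS J1 J2 s x -> min_gap <= U_ball J1 J2 s x - Umin J1 J2.
Proof.
rewrite in_CS_class U_ball_class => /negbTE off_min.
have : min_gap <= Uval_gap (class_of s x).
  by rewrite /min_gap; case: (class_ofP s x) => ->; rewrite !ge_min lexx ?orbT.
by rewrite /Uval_gap off_min.
Qed.

End Gap.

Section Peierls.
Variables (R : realType) (J1 J2 : R).
Hypotheses (not_min2 : Uval J1 J2 2 != Umin J1 J2) (not_min4 : Uval J1 J2 4 != Umin J1 J2).
Variables (a s : config) (D : seq V).
Hypotheses (a_gs : List.In a (ground_states J1 J2)) (eq_off_D : forall x, x \notin D -> s x = a x).
Local Open Scope ring_scope.

Definition bad_centers := [seq x <- relevant D | ~~ in_CS J1 J2 s x].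

Lemma not_in_CS_relevant x : ~~ in_CS J1 J2 s x -> x \in relevant D.
Proof.
apply: contraR => xN; rewrite (@eq_in_CS _ _ _ s a) ?ground_states_in_CS //.
  by apply: eq_off_D; apply: contra xN; apply: mem_relevant.
move=> i; apply: eq_off_D; apply: contra xN => /mem_relevant_nbrs; apply.
exact/nbrs_sym/mem_nbrs.
Qed.

Lemma improper_near_bad x : improper (ground_states J1 J2) s x ->
  exists2 y, y \in walk_ball 1 x & ~~ in_CS J1 J2 s y.
Proof.
move=> Hx; apply/allPn/negP => /allP good.
have [|i|a' Ha' agree] := in_CS_walk_ball2 not_min2 not_min4 (s := s) (x := x).
- by apply: good; rewrite walk_ball1 mem_head.
- by apply: good; rewrite walk_ball1 inE mem_nbrs orbT.
have [y [xy]] := Hx a' Ha'; apply; exact/agree/dist_walk_ball.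
Qed.

Lemma boundary_near_bad z : ball_in_boundary (ground_states J1 J2) s z ->
  exists2 y, y \in bad_centers & z \in walk_ball 3 y.
Proof.
move=> Hz; have [x [Hx xz]] : in_boundary (ground_states J1 J2) s z.
  by apply: Hz; rewrite /in_ball dist_refl.
have [y yx bad] := improper_near_bad Hx.
exists y; first by rewrite mem_filter bad not_in_CS_relevant.
exact: walk_ball_trans (walk_ball1_sym yx) (dist_walk_ball xz).
Qed.

Definition boundary_centers : seq V :=
  [seq z <- undup (flatten [seq walk_ball 3 y | y <- relevant D])
     | `[< ball_in_boundary (ground_states J1 J2) s z >]].

Lemma boundary_centersP z :
  z \in boundary_centers <-> ball_in_boundary (ground_states J1 J2) s z.
Proof.
rewrite mem_filter; split => [/andP[/asboolP //]|Hz].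
rewrite (asboolT Hz) /= mem_undup; have [y] := boundary_near_bad Hz.
by rewrite mem_filter => /andP[_ Hy] zy; apply/flatten_mapP; exists y.
Qed.

Lemma size_boundary_centers : (size boundary_centers <= 64 * size bad_centers)%N.
Proof.
rewrite -(size_flatten_map_const bad_centers (size_walk_ball 3)).
apply: uniq_leq_size => [|z /boundary_centersP/boundary_near_bad[y Hy zy]].
  by rewrite filter_uniq ?undup_uniq.
by apply/flatten_mapP; exists y.
Qed.

Lemma Hrel_ge_bad : min_gap J1 J2 * (size bad_centers)%:R <= Hrel J1 J2 D s a.
Proof.
have [_ Ua] := ground_states_ground_state a_gs.
have -> : min_gap J1 J2 * (size bad_centers)%:R =
    \sum_(x <- relevant D | ~~ in_CS J1 J2 s x) min_gap J1 J2.
  by rewrite big_const_seq iter_addr_0 -size_filter mulr_natr.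
rewrite Hrel_excess //; under [X in _ <= X]eq_bigr do rewrite Ua.
rewrite [X in _ <= X](bigID (fun x => ~~ in_CS J1 J2 s x)) /= -[X in X <= _]addr0 lerD //.
  by apply: ler_sum => x; apply: min_gap_le_excess.
by apply: sumr_ge0 => x _; apply: U_ball_excess_ge0.
Qed.

End Peierls.

Unset Implicit Arguments.

Theorem theorem6p3 (R : realType) (J1 J2 : R) :
  (forall (x x' : V) (sigma : config),
      in_CS J1 J2 sigma x -> balls_nbr x x' ->
      exists tau : config,
        [/\ in_CS J1 J2 tau x', compatible sigma x tau x' &
            forall tau' : config, in_CS J1 J2 tau' x' -> compatible sigma x tau' x' ->
              agree_on_ball x' tau' tau]) ->
  Peierls J1 J2.
Proof.
move=> uniq_ext.
have not_min2 := Uval2_not_min uniq_ext; have not_min4 := Uval4_not_min uniq_ext.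
exists (ground_states J1 J2); split; first exact: ground_state_iff.
split; first exact: ground_states_period_le2.
exists (min_gap J1 J2 / 64%:R)%R; split; first by rewrite divr_gt0 ?min_gap_gt0.
move=> a a_gs s D eq_off_D; exists (boundary_centers J1 J2 s D); split.
- by rewrite filter_uniq ?undup_uniq.
- exact: (boundary_centersP not_min2 not_min4 a_gs eq_off_D).
apply: le_trans (Hrel_ge_bad a_gs eq_off_D).
rewrite -mulrA ler_pM2l ?min_gap_gt0 // ler_pdivrMl ?ltr0n // -natrM ler_nat.
exact: (size_boundary_centers not_min2 not_min4 a_gs eq_off_D).
Qed.
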